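(* Let $\lambda\ge L_\varphi^2$ and for $t\ge1$ let $\widehat\varphi_{t,s'}=\varphi_{t,s'}-\sum_{s''\in\mathcal S_t}p_{t,s''}(\widehat\theta_{t+1})\varphi_{t,s''}$. Then (1) $\sum_{t=1}^T\max_{s'\in\mathcal S_t}\|\varphi_{t,s'}\|^2_{\Sigma_t^{-1}}\le\frac{2d}{\kappa}\log\big(1+\frac{T\mathcal UL_\varphi^2}{\lambda d}\big)$; (2) $\sum_{t=1}^T\sum_{s'\in\mathcal S_t}p_{t,s'}(\widehat\theta_{t+1})\|\widehat\varphi_{t,s'}\|^2_{\Sigma_t^{-1}}\le2d\log\big(1+\frac{T\mathcal UL_\varphi^2}{\lambda d}\big)$; (3) $\sum_{t=1}^T\max_{s'\in\mathcal S_t}\|\widehat\varphi_{t,s'}\|^2_{\Sigma_t^{-1}}\le\frac{8d}{\kappa}\log\big(1+\frac{T\mathcal UL_\varphi^2}{\lambda d}\big)$.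
   Context: MNL model: finite $\mathcal S,\mathcal A$, reachable sets $\mathcal S_{s,a}$, $\mathcal U=\max|\mathcal S_{s,a}|$, features $\varphi(s,a,s')\in\mathbb R^d$, $p(s'\mid s,a,\theta)=\exp(\varphi(s,a,s')^\top\theta)/\sum_{s''\in\mathcal S_{s,a}}\exp(\varphi(s,a,s'')^\top\theta)$, true $\theta^*$. Along a trajectory $(s_t,a_t)$: $\mathcal S_t=\mathcal S_{s_t,a_t}$, $\varphi_{t,s'}=\varphi(s_t,a_t,s')$, $p_{t,s'}(\theta)=p(s'\mid s_t,a_t,\theta)$. Assumptions: (A1) $\|\varphi\|_2\le L_\varphi$, $\|\theta^*\|_2\le L_\theta$, $\Theta=\{\|\theta\|_2\le L_\theta\}$; (A2) $\inf_{\theta\in\Theta}p_{t,s'}(\theta)p_{t,s''}(\theta)\ge\kappa\in(0,1)$ for all $t\in[T]$, $s',s''\in\mathcal S_t$; (A3) each $\mathcal S_{s,a}$ contains $s'$ with $\varphi(s,a,s')=0$. Estimator: $\ell_t(\theta)=-\sum_{s'\in\mathcal S_t}\mathbf 1\{s_{t+1}=s'\}\log p_{t,s'}(\theta)$; $\widehat\theta_1=0$, $\Sigma_t=\lambda I_d+\sum_{i<t}\nabla^2\ell_i(\widehat\theta_{i+1})$, $\widehat\Sigma_t=\Sigma_t+\eta\nabla^2\ell_t(\widehat\theta_t)$, $\widehat\theta_{t+1}=\arg\min_{\theta\in\Theta}\{\nabla\ell_t(\widehat\theta_t)^\top(\theta-\widehat\theta_t)+\frac1{2\eta}\|\theta-\widehat\theta_t\|^2_{\widehat\Sigma_t}\}$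 ($\eta>0$). *)

From HB Require Import structures.
From mathcomp Require Import all_boot all_order all_algebra.
From mathcomp Require Import reals.
From mathcomp Require Import sequences.
From mathcomp.analysis Require Import exp.
Set Implicit Arguments. Unset Strict Implicit. Unset Printing Implicit Defensive.
Import Order.TTheory GRing.Theory Num.Theory.
Local Open Scope ring_scope.

Section MNL.
Variable R : realType.
Variables (S A : finType) (d : nat).
Variable Sr : S -> A -> {set S}.
Variable phi : S -> A -> S -> 'cV[R]_d.

Definition dotv (x y : 'cV[R]_d) : R := (x^T *m y) 0 0.
Definition norm2 (x : 'cV[R]_d) : R := Num.sqrt (dotv x x).
Definition wnorm2 (M : 'M[R]_d) (x : 'cV[R]_d) : R := (x^T *m M *m x) 0 0.

Definition Umax : nat := (\max_(s : S) \max_(a : A) #|Sr s a|)%N.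

Definition mnl_prob (s : S) (a : A) (s' : S) (th : 'cV[R]_d) : R :=
  expR (dotv (phi s a s') th) /
  \sum_(s'' in Sr s a) expR (dotv (phi s a s'') th).

Variables (st : nat -> S) (at_ : nat -> A).

Definition St (t : nat) : {set S} := Sr (st t) (at_ t).
Definition phit (t : nat) (s' : S) : 'cV[R]_d := phi (st t) (at_ t) s'.
Definition pt (t : nat) (s' : S) (th : 'cV[R]_d) : R :=
  mnl_prob (st t) (at_ t) s' th.

Definition phibar (t : nat) (th : 'cV[R]_d) : 'cV[R]_d :=
  \sum_(s' in St t) pt t s' th *: phit t s'.

(* gradient of ell_t(theta) = - sum_{s'} 1{s_{t+1}=s'} log p_{t,s'}(theta) *)
Definition grad_loss (t : nat) (th : 'cV[R]_d) : 'cV[R]_d :=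
  phibar t th - phit t (st t.+1).

(* Hessian of ell_t at theta *)
Definition hess_loss (t : nat) (th : 'cV[R]_d) : 'M[R]_d :=
  \sum_(s' in St t) pt t s' th *: (phit t s' *m (phit t s')^T)
  - phibar t th *m (phibar t th)^T.

Variables (lam eta Ltheta : R) (thhat : nat -> 'cV[R]_d).

Definition Sigma (t : nat) : 'M[R]_d :=
  lam%:M + \sum_(1 <= i < t) hess_loss i (thhat i.+1).

Definition Sigmahat (t : nat) : 'M[R]_d :=
  Sigma t + eta *: hess_loss t (thhat t).

Definition omd_obj (t : nat) (th : 'cV[R]_d) : R :=
  dotv (grad_loss t (thhat t)) (th - thhat t)
  + (2 * eta)^-1 * wnorm2 (Sigmahat t) (th - thhat t).

Definition is_omd_seq : Prop :=
  thhat 1%N = 0 /\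
  forall t : nat, (1 <= t)%N ->
    norm2 (thhat t.+1) <= Ltheta /\
    forall th : 'cV[R]_d, norm2 th <= Ltheta -> omd_obj t (thhat t.+1) <= omd_obj t th.

Definition phihat (t : nat) (s' : S) : 'cV[R]_d :=
  phit t s' - \sum_(s'' in St t) pt t s'' (thhat t.+1) *: phit t s''.

End MNL.

(* Elliptical potential argument.  Write W_t for the t-th summand of (2).  By
   the determinant lemma for rank-one updates, det Sigma_(t+1) >= det Sigma_t
   (1 + W_t).  The hypothesis lambda >= L_phi^2 gives W_t <= 1, hence
   W_t <= 2 ln (1 + W_t).  The logarithms telescope to
   ln det Sigma_(T+1) - ln det Sigma_1.  Hadamard's inequality and AM-GM bound
   this difference by the trace, hence by d ln (1 + T U L_phi^2 / (lambda d)),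
   which proves (2).  For (1) and (3), W_t is half of the p (x) p-weighted sum
   of the squared distances ||phi_s - phi_s'||^2.  By (A2) the weights are at
   least kappa, and by (A3) some feature vanishes, so
   kappa sum_s ||phi_s||^2 <= W_t.  Finally ||phihat_s||^2 is at most
   2 ||phi_s||^2 + 2 ||phibar||^2, hence at most 4 sum_s ||phi_s||^2. *)

From HB Require Import structures.
From mathcomp Require Import all_boot all_order all_algebra.
From mathcomp Require Import reals.
From mathcomp Require Import sequences.
From mathcomp.analysis Require Import exp.
From mathcomp Require Import ring lra.
Import Order.TTheory GRing.Theory Num.Theory.
Local Open Scope ring_scope.

Set Implicit Arguments. Unset Strict Implicit. Unset Printing Implicit Defensive.

Section QuadraticForm.
Variables (R : realType) (n : nat).
Implicit Types (M N : 'M[R]_n) (u x y z : 'cV[R]_n).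

Definition mxform M x y : R := (x^T *m M *m y) 0 0.

Lemma wnorm2E M x : wnorm2 M x = mxform M x x. Proof. by []. Qed.

Lemma mxformDl M x y z : mxform M (x + y) z = mxform M x z + mxform M y z.
Proof. by rewrite /mxform linearD /= !mulmxDl mxE. Qed.

Lemma mxformDr M x y z : mxform M z (x + y) = mxform M z x + mxform M z y.
Proof. by rewrite /mxform !mulmxDr mxE. Qed.

Lemma mxformZl M a x y : mxform M (a *: x) y = a * mxform M x y.
Proof. by rewrite /mxform linearZ /= -!scalemxAl mxE. Qed.

Lemma mxformZr M a x y : mxform M x (a *: y) = a * mxform M x y.
Proof. by rewrite /mxform -!scalemxAr mxE. Qed.

Lemma mxformNl M x y : mxform M (- x) y = - mxform M x y.
Proof. by rewrite -scaleN1r mxformZl mulN1r. Qed.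

Lemma mxformNr M x y : mxform M x (- y) = - mxform M x y.
Proof. by rewrite -scaleN1r mxformZr mulN1r. Qed.

Lemma mxformBl M x y z : mxform M (x - y) z = mxform M x z - mxform M y z.
Proof. by rewrite mxformDl mxformNl. Qed.

Lemma mxformBr M x y z : mxform M z (x - y) = mxform M z x - mxform M z y.
Proof. by rewrite mxformDr mxformNr. Qed.

Lemma mxform0l M y : mxform M 0 y = 0.
Proof. by rewrite /mxform trmx0 !mul0mx mxE. Qed.

Lemma mxform0r M y : mxform M y 0 = 0.
Proof. by rewrite /mxform !mulmx0 mxE. Qed.

Lemma mxformC M x y : M^T = M -> mxform M x y = mxform M y x.
Proof.
move=> sM; rewrite /mxform -[in LHS](trmxK (x^T *m M *m y)) mxE.
by rewrite !trmx_mul trmxK sM mulmxA.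
Qed.

Lemma mxform_suml I (r : seq I) (P : pred I) (F : I -> 'cV_n) M y :
  mxform M (\sum_(i <- r | P i) F i) y = \sum_(i <- r | P i) mxform M (F i) y.
Proof.
elim/big_rec2: _ => [|i a Mi _ <-]; first exact: mxform0l.
by rewrite mxformDl.
Qed.

Lemma mxform_sumr I (r : seq I) (P : pred I) (F : I -> 'cV_n) M x :
  mxform M x (\sum_(i <- r | P i) F i) = \sum_(i <- r | P i) mxform M x (F i).
Proof.
elim/big_rec2: _ => [|i a Mi _ <-]; first exact: mxform0r.
by rewrite mxformDr.
Qed.

Lemma mxform_addmx M N x y : mxform (M + N) x y = mxform M x y + mxform N x y.
Proof. by rewrite /mxform mulmxDr mulmxDl mxE. Qed.

Lemma mxform_scalemx a M x y : mxform (a *: M) x y = a * mxform M x y.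
Proof. by rewrite /mxform -scalemxAr -scalemxAl mxE. Qed.

Lemma mxform_summx I (r : seq I) (P : pred I) (F : I -> 'M_n) x y :
  mxform (\sum_(i <- r | P i) F i) x y = \sum_(i <- r | P i) mxform (F i) x y.
Proof.
elim/big_rec2: _ => [|i a Mi _ <-]; first by rewrite /mxform mulmx0 mul0mx mxE.
by rewrite mxform_addmx.
Qed.

Lemma mxform1 x y : mxform 1%:M x y = dotv x y.
Proof. by rewrite /mxform mulmx1. Qed.

Lemma dotvC x y : dotv x y = dotv y x.
Proof. by rewrite -!mxform1 mxformC // trmx1. Qed.

Lemma mxform_outer u x y : mxform (u *m u^T) x y = dotv x u * dotv u y.
Proof. by rewrite /mxform /dotv !mulmxA -mulmxA [in LHS]mxE big_ord1. Qed.

Lemma wnorm2Z M a x : wnorm2 M (a *: x) = a ^+ 2 * wnorm2 M x.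
Proof. by rewrite !wnorm2E mxformZl mxformZr mulrA -expr2. Qed.

Lemma wnorm2_0 M : wnorm2 M 0 = 0.
Proof. exact: mxform0l. Qed.

Lemma wnorm2_1 x : wnorm2 1%:M x = dotv x x.
Proof. exact: mxform1. Qed.

Lemma wnorm2_scalar a x : wnorm2 a%:M x = a * dotv x x.
Proof. by rewrite /wnorm2 mul_mx_scalar -scalemxAl mxE. Qed.

Lemma wnorm2_add_outer M c u x :
  wnorm2 (M + c *: (u *m u^T)) x = wnorm2 M x + c * dotv u x ^+ 2.
Proof. by rewrite !wnorm2E mxform_addmx mxform_scalemx mxform_outer dotvC expr2. Qed.

Lemma wnorm2B_le M x y : M^T = M -> 0 <= wnorm2 M (x + y) ->
  wnorm2 M (x - y) <= 2 * wnorm2 M x + 2 * wnorm2 M y.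
Proof.
move=> sM; rewrite !wnorm2E mxformBl !mxformBr mxformDl !mxformDr (mxformC y x sM).
lra.
Qed.

Lemma dotv_sqr_sum x : dotv x x = \sum_i x i 0 ^+ 2.
Proof. by rewrite /dotv mxE; apply: eq_bigr => i _; rewrite mxE expr2. Qed.

Lemma dotv_ge0 x : 0 <= dotv x x.
Proof. by rewrite dotv_sqr_sum sumr_ge0 // => i _; rewrite sqr_ge0. Qed.

Lemma dotv_eq0 x : (dotv x x == 0) = (x == 0).
Proof.
apply/idP/eqP => [|->]; last by rewrite /dotv mulmx0 mxE.
rewrite dotv_sqr_sum psumr_eq0 => [/allP x0|i _]; last exact: sqr_ge0.
apply/matrixP => i j; rewrite (ord1 j) mxE.
by apply/eqP; rewrite -sqrf_eq0; apply: x0; rewrite mem_index_enum.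
Qed.

Lemma dotv_le_sqr x L : norm2 x <= L -> dotv x x <= L ^+ 2.
Proof.
rewrite /norm2 => xL; rewrite -(sqr_sqrtr (dotv_ge0 x)).
by rewrite lerXn2r // ?nnegrE ?sqrtr_ge0 // (le_trans (sqrtr_ge0 _) xL).
Qed.

Lemma norm2_le_eq0 x L : norm2 x <= L -> L ^+ 2 <= 0 -> x = 0.
Proof.
move=> xL L0; apply/eqP; rewrite -dotv_eq0 eq_le dotv_ge0 andbT.
exact: le_trans (dotv_le_sqr xL) L0.
Qed.

End QuadraticForm.

Section PositiveDefinite.
Variables (R : realType) (n : nat).
Implicit Types (M N : 'M[R]_n) (u x y : 'cV[R]_n).

Definition posdef M := M^T = M /\ forall x, x != 0 -> 0 < wnorm2 M x.

Lemma posdef_wnorm2_ge0 M x : posdef M -> 0 <= wnorm2 M x.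
Proof.
case=> _ pM; have [->|nz] := eqVneq x 0; first by rewrite wnorm2_0.
exact/ltW/pM.
Qed.

Lemma posdef_unitmx M : posdef M -> M \in unitmx.
Proof.
case=> _ pM; rewrite -row_free_unit -kermx_eq0; apply/eqP/row_matrixP => i.
rewrite row0; apply/eqP/negPn/negP => nz.
have kM : row i (kermx M) *m M = 0 by rewrite -row_mul mulmx_ker row0.
have := pM (row i (kermx M))^T; rewrite trmx_eq0 => /(_ nz).
by rewrite /wnorm2 trmxK kM mul0mx mxE ltxx.
Qed.

Lemma posdef_scalar a : 0 < a -> posdef (a%:M : 'M[R]_n).
Proof.
move=> a0; split=> [|x nz]; first by rewrite tr_scalar_mx.
by rewrite wnorm2_scalar mulr_gt0 // lt_def dotv_eq0 nz dotv_ge0.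
Qed.

Lemma dotv_invmx M u : dotv u (invmx M *m u) = wnorm2 (invmx M) u.
Proof. by rewrite /dotv /wnorm2 mulmxA. Qed.

Lemma mxform_invmx M y u : M \in unitmx -> mxform M y (invmx M *m u) = dotv y u.
Proof. by move=> uM; rewrite /mxform -mulmxA (mulmxA M) mulmxV // mul1mx. Qed.

Lemma wnorm2_invmx M u : M \in unitmx ->
  wnorm2 M (invmx M *m u) = wnorm2 (invmx M) u.
Proof. by move=> uM; rewrite wnorm2E mxform_invmx // dotvC dotv_invmx. Qed.

(* Variational formula for the dual norm, with equality at [x = M^-1 u]. *)
Lemma wnorm2_invmx_fenchel M u x : posdef M ->
  2 * dotv u x - wnorm2 M x <= wnorm2 (invmx M) u.
Proof.
move=> pdM; have uM := posdef_unitmx pdM.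
have := posdef_wnorm2_ge0 (x - invmx M *m u) pdM.
rewrite wnorm2E mxformBl !mxformBr -!wnorm2E wnorm2_invmx //.
rewrite [mxform M (invmx M *m u) x]mxformC; last exact: pdM.1.
rewrite !mxform_invmx // dotvC; lra.
Qed.

Lemma posdef_wnorm2_invmx_ge0 M u : posdef M -> 0 <= wnorm2 (invmx M) u.
Proof.
move=> pdM; have := wnorm2_invmx_fenchel u 0 pdM.
by rewrite wnorm2_0 /dotv mulmx0 mxE mulr0 subr0.
Qed.

Lemma posdef_cauchy_schwarz M u x : posdef M ->
  dotv u x ^+ 2 <= wnorm2 (invmx M) u * wnorm2 M x.
Proof.
move=> pdM; have [->|nz] := eqVneq x 0.
  by rewrite wnorm2_0 /dotv mulmx0 mxE expr0n mulr0.
have q_gt0 := pdM.2 x nz.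
set a := dotv u x; set q := wnorm2 M x.
have := wnorm2_invmx_fenchel u ((a / q) *: x) pdM.
rewrite wnorm2Z /dotv -scalemxAr mxE -/(dotv u x) -/a -/q.
have -> : 2 * (a / q * a) - (a / q) ^+ 2 * q = a ^+ 2 / q.
  by field; rewrite gt_eqF.
by rewrite ler_pdivrMr.
Qed.

Lemma posdef_invmx_le M N a u : posdef M -> posdef N -> 0 < a ->
  (forall x, wnorm2 N x <= a * wnorm2 M x) ->
  wnorm2 (invmx M) u <= a * wnorm2 (invmx N) u.
Proof.
move=> pdM pdN a_gt0 NleM; set w := wnorm2 (invmx M) u.
set x := a^-1 *: (invmx M *m u).
have Mx : a * wnorm2 M x = a^-1 * w.
  rewrite wnorm2Z wnorm2_invmx ?posdef_unitmx // mulrA expr2 mulrA.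
  by rewrite divff ?gt_eqF // mul1r.
have ux : dotv u x = a^-1 * w.
  by rewrite /dotv -scalemxAr mxE -/(dotv _ _) dotv_invmx.
have := wnorm2_invmx_fenchel u x pdN; rewrite ux.
have := NleM x; rewrite Mx => h1 h2.
by rewrite -ler_pdivrMl // mulrC; lra.
Qed.

End PositiveDefinite.

Section Hadamard.
Variable R : realType.

Lemma wnorm2_delta n (M : 'M[R]_n) i : wnorm2 M (delta_mx i 0) = M i i.
Proof. by rewrite /wnorm2 trmx_delta -rowE -colE !mxE. Qed.

Lemma delta_mx_neq0 n (i : 'I_n) : (delta_mx i 0 : 'cV[R]_n) != 0.
Proof.
apply/negP => /eqP /matrixP /(_ i 0); rewrite !mxE !eqxx /=.
by move/eqP; rewrite oner_eq0.
Qed.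

Lemma posdef_diag_gt0 n (M : 'M[R]_n) i : posdef M -> 0 < M i i.
Proof. by move=> pdM; rewrite -wnorm2_delta pdM.2 ?delta_mx_neq0. Qed.

Lemma wnorm2_lift0 n (M : 'M[R]_n.+1) (x : 'cV[R]_n) :
  let y := \col_i (if unlift ord0 i is Some j then x j 0 else 0) in
  wnorm2 M y = wnorm2 (row' ord0 (col' ord0 M)) x.
Proof.
move=> y; have y0 : y ord0 0 = 0 by rewrite mxE unlift_none.
have yl j : y (lift ord0 j) 0 = x j 0 by rewrite mxE liftK.
rewrite /wnorm2 !mxE big_ord_recl y0 mulr0 add0r.
apply: eq_bigr => j _; rewrite yl; congr (_ * _).
rewrite mxE big_ord_recl mxE y0 mul0r add0r [RHS]mxE.
by apply: eq_bigr => k _; rewrite [y^T _ _]mxE yl !mxE.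
Qed.

Lemma posdef_minor0 n (M : 'M[R]_n.+1) : posdef M -> posdef (row' ord0 (col' ord0 M)).
Proof.
case=> sM pM; split=> [|x nz].
  by rewrite tr_row' tr_col' sM; apply/matrixP => i j; rewrite !mxE.
rewrite -wnorm2_lift0; apply: pM; apply: contraNneq nz => y0.
apply/eqP/matrixP => j k; rewrite (ord1 k) mxE.
by have := congr1 (fun v : 'cV_n.+1 => v (lift ord0 j) 0) y0; rewrite /= !mxE liftK.
Qed.

Lemma hadamard n (M : 'M[R]_n) : posdef M -> 0 < \det M <= \prod_i M i i.
Proof.
elim: n M => [|n IH] M pdM; first by rewrite det_mx00 big_ord0 ltr01 lexx.
set m := row' ord0 (col' ord0 M); set e : 'cV[R]_n.+1 := delta_mx ord0 0.
have /andP[m_gt0 m_le] := IH m (posdef_minor0 pdM).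
have M00_gt0 := posdef_diag_gt0 ord0 pdM.
(* Cramer's rule gives [M^-1 0 0 = det m / det M], and Cauchy-Schwarz at
   [e_0] gives [1 <= M^-1 0 0 * M 0 0]. *)
have invM00 : invmx M ord0 ord0 = (\det M)^-1 * \det m.
  by rewrite /invmx posdef_unitmx // !mxE /cofactor /= expr0 mul1r.
have ee : dotv e e = 1 by rewrite -mxform1 -wnorm2E wnorm2_delta mxE.
have cs : 1 <= (\det M)^-1 * (\det m * M ord0 ord0).
  have := posdef_cauchy_schwarz e e pdM.
  by rewrite !wnorm2_delta invM00 ee expr1n mulrA.
have detM_gt0 : 0 < \det M.
  have := lt_le_trans ltr01 cs.
  by rewrite pmulr_lgt0 ?mulr_gt0 // invr_gt0.
rewrite detM_gt0 big_ord_recl mulrC /=.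
have -> : \prod_i M (lift ord0 i) (lift ord0 i) = \prod_i m i i.
  by apply: eq_bigr => i _; rewrite !mxE.
apply: le_trans (ler_wpM2r (ltW M00_gt0) m_le).
by move: cs; rewrite ler_pdivlMl // mulr1.
Qed.

Lemma posdef_det_gt0 n (M : 'M[R]_n) : posdef M -> 0 < \det M.
Proof. by case/hadamard/andP. Qed.

Lemma posdef_det_le_trace n (M : 'M[R]_n) : posdef M -> \det M <= (\tr M / n%:R) ^+ n.
Proof.
move=> pdM; have /andP[_ /le_trans] := hadamard pdM; apply.
have [AGM _] := @leif_AGM _ _ predT (fun i => M i i)
  (fun i _ => ltW (posdef_diag_gt0 i pdM)).
by rewrite cardT size_enum_ord in AGM.
Qed.

End Hadamard.

Section RankOneUpdates.
Variables (R : realType) (n : nat).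
Implicit Types (M : 'M[R]_n) (u x : 'cV[R]_n).

(* Matrix determinant lemma, from the block factorisation
   [[1 + a b, -a], [0, 1]] [[1, 0], [b, 1]] =
   [[1, 0], [b, 1]] [[1, -a], [0, 1 + b a]]. *)
Lemma det_1D_outer (a : 'cV[R]_n) (b : 'rV[R]_n) :
  \det (1%:M + a *m b) = 1 + (b *m a) 0 0.
Proof.
pose P := block_mx (1%:M + a *m b) (- a) 0 (1%:M : 'M[R]_1).
pose L := block_mx (1%:M : 'M[R]_n) 0 b (1%:M : 'M[R]_1).
pose U := block_mx (1%:M : 'M[R]_n) (- a) 0 (1%:M + b *m a : 'M[R]_1).
have PL : P *m L = L *m U.
  rewrite /P /L /U !mulmx_block !mulmx1 !mul1mx !mulmx0 !mul0mx !addr0 !add0r.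
  by rewrite mulNmx addrK mulmxN (addrC 1%:M) addKr.
have := congr1 determinant PL.
rewrite !det_mulmx /P /L /U !det_ublock !det_lblock !det1.
by rewrite !mulr1 !mul1r det_mx11 !mxE eqxx mulr1n.
Qed.

Lemma det_add_outer M c u : M \in unitmx ->
  \det (M + c *: (u *m u^T)) = \det M * (1 + c * wnorm2 (invmx M) u).
Proof.
move=> uM.
have -> : M + c *: (u *m u^T) = M *m (1%:M + (invmx M *m u) *m (c *: u^T)).
  by rewrite mulmxDr mulmx1 !mulmxA mulmxV // mul1mx scalemxAr.
rewrite det_mulmx det_1D_outer -scalemxAl mxE.
by rewrite /wnorm2 mulmxA.
Qed.

Lemma posdef_add_outer M c u : posdef M -> 0 <= c -> posdef (M + c *: (u *m u^T)).
Proof.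
move=> [sM pM] c0; split=> [|x nz].
  by rewrite linearD /= sM linearZ /= trmx_mul trmxK.
by rewrite wnorm2_add_outer ltr_wpDr ?pM // mulr_ge0 ?sqr_ge0.
Qed.

Lemma wnorm2_add_outer_le M c u x : posdef M -> 0 <= c ->
  wnorm2 (M + c *: (u *m u^T)) x <= (1 + c * wnorm2 (invmx M) u) * wnorm2 M x.
Proof.
move=> pdM c0; rewrite wnorm2_add_outer mulrDl mul1r lerD2l -mulrA.
exact/ler_wpM2l/posdef_cauchy_schwarz.
Qed.

Definition outer_update M (l : seq (R * 'cV[R]_n)) :=
  M + \sum_(k <- l) k.1 *: (k.2 *m k.2^T).

Lemma outer_update_cons M c u l :
  outer_update M ((c, u) :: l) = outer_update (M + c *: (u *m u^T)) l.
Proof. by rewrite /outer_update big_cons addrA. Qed.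

Lemma posdef_outer_update M l :
  all (fun k => 0 <= k.1) l -> posdef M -> posdef (outer_update M l).
Proof.
elim: l M => [|[c u] l IH] M; first by rewrite /outer_update big_nil addr0.
by case/andP=> c0 l0 pdM; rewrite outer_update_cons; apply/IH/posdef_add_outer.
Qed.

Lemma wnorm2_outer_update M l x :
  wnorm2 (outer_update M l) x = wnorm2 M x + \sum_(k <- l) k.1 * dotv k.2 x ^+ 2.
Proof.
rewrite /outer_update !wnorm2E mxform_addmx mxform_summx; congr (_ + _).
by apply: eq_bigr => k _; rewrite mxform_scalemx mxform_outer dotvC expr2.
Qed.

Lemma mxtrace_outer_update M l :
  \tr (outer_update M l) = \tr M + \sum_(k <- l) k.1 * dotv k.2 k.2.
Proof.
rewrite /outer_update mxtraceD linear_sum /=; congr (_ + _); apply: eq_bigr => k _.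
by rewrite mxtraceZ mxtrace_mulC /mxtrace big_ord1.
Qed.

(* After the first update [M1 = M + c u u^T] we have
   [M1 <= (1 + c ||u||^2_{M^-1}) M], so passing from [M1^-1] to [M^-1] in the
   remaining weights costs exactly the factor already gained in [det M1]. *)
Lemma det_outer_update_ge M l : all (fun k => 0 <= k.1) l -> posdef M ->
  \det M * (1 + \sum_(k <- l) k.1 * wnorm2 (invmx M) k.2) <= \det (outer_update M l).
Proof.
elim: l M => [|[c u] l IH] M.
  by move=> _ _; rewrite /outer_update !big_nil !addr0 mulr1.
case/andP=> /= c_ge0 l_ge0 pdM; rewrite outer_update_cons.
set M1 := M + c *: (u *m u^T); set a := 1 + c * wnorm2 (invmx M) u.
have pdM1 : posdef M1 by exact: posdef_add_outer.
apply: le_trans (IH M1 l_ge0 pdM1).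
rewrite det_add_outer ?posdef_unitmx // -mulrA ler_pM2l ?posdef_det_gt0 //.
rewrite big_cons /= addrA -/a mulrDr mulr1 lerD2l big_distrr /= !big_seq.
apply: ler_sum => -[c' u'] k_in /=; rewrite mulrCA ler_wpM2l ?(allP l_ge0 _ k_in) //.
apply: posdef_invmx_le => // [|x]; last exact: wnorm2_add_outer_le.
by rewrite ltr_pwDl // mulr_ge0 // posdef_wnorm2_invmx_ge0.
Qed.

End RankOneUpdates.

Section WeightedSums.
Variables (R : realType) (n : nat) (I : finType) (B : {pred I}).
Variables (w : I -> R) (f : I -> 'cV[R]_n).
Hypothesis w_sum1 : \sum_(i in B) w i = 1.
Let fbar := \sum_(i in B) w i *: f i.

Lemma mxform_wmeanl M y : \sum_(i in B) w i * mxform M (f i) y = mxform M fbar y.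
Proof. by rewrite mxform_suml; apply: eq_bigr => i _; rewrite mxformZl. Qed.

Lemma mxform_wmeanr M x : \sum_(i in B) w i * mxform M x (f i) = mxform M x fbar.
Proof. by rewrite mxform_sumr; apply: eq_bigr => i _; rewrite mxformZr. Qed.

Lemma wsum_wnorm2_centered M : M^T = M ->
  \sum_(i in B) w i * wnorm2 M (f i - fbar) =
  \sum_(i in B) w i * wnorm2 M (f i) - wnorm2 M fbar.
Proof.
move=> sM; rewrite (eq_bigr (fun i => w i * wnorm2 M (f i)
  - 2 * (w i * mxform M (f i) fbar) + w i * wnorm2 M fbar)); last first.
  by move=> i _; rewrite !wnorm2E mxformBl !mxformBr (mxformC fbar (f i) sM); ring.
rewrite big_split /= sumrB -mulr_sumr -big_distrl /= w_sum1 mul1r mxform_wmeanl.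
by rewrite -wnorm2E; ring.
Qed.

Lemma wsum_wnorm2_pairdiff M : M^T = M ->
  \sum_(i in B) \sum_(j in B) w i * w j * wnorm2 M (f i - f j) =
  2 * \sum_(i in B) w i * wnorm2 M (f i - fbar).
Proof.
move=> sM; rewrite wsum_wnorm2_centered //.
have row_sum i : \sum_(j in B) w i * w j * wnorm2 M (f i - f j) =
    w i * wnorm2 M (f i) - 2 * (w i * mxform M (f i) fbar) +
    w i * \sum_(j in B) w j * wnorm2 M (f j).
  rewrite (eq_bigr (fun j => w i * wnorm2 M (f i) * w j
    - 2 * (w i * (w j * mxform M (f i) (f j))) + w i * (w j * wnorm2 M (f j)))).
    rewrite big_split /= sumrB -!mulr_sumr w_sum1 mulr1.
    by rewrite mxform_wmeanr.
  by move=> j _; rewrite !wnorm2E mxformBl !mxformBr (mxformC (f j) (f i) sM); ring.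
rewrite (eq_bigr _ (fun i _ => row_sum i)).
rewrite big_split /= sumrB -!mulr_sumr -big_distrl /= w_sum1 mul1r mxform_wmeanl.
by rewrite -wnorm2E; ring.
Qed.

Lemma wsum_outer_centered :
  \sum_(i in B) w i *: (f i *m (f i)^T) - fbar *m fbar^T =
  \sum_(i in B) w i *: ((f i - fbar) *m (f i - fbar)^T).
Proof.
have expand i : w i *: ((f i - fbar) *m (f i - fbar)^T) =
   w i *: (f i *m (f i)^T) - w i *: (f i *m fbar^T) - w i *: (fbar *m (f i)^T)
   + w i *: (fbar *m fbar^T).
  rewrite linearB /= mulmxBl !mulmxBr !scalerDr !scalerN.
  by rewrite scalerBr opprB addrA addrAC.
have meanl : \sum_(i in B) w i *: (f i *m fbar^T) = fbar *m fbar^T.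
  by rewrite /fbar mulmx_suml; apply: eq_bigr => i _; rewrite scalemxAl.
have meanr : \sum_(i in B) w i *: (fbar *m (f i)^T) = fbar *m fbar^T.
  rewrite /fbar [in RHS]linear_sum /= mulmx_sumr; apply: eq_bigr => i _.
  by rewrite linearZ /= scalemxAr.
rewrite (eq_bigr _ (fun i _ => expand i)) big_split /= !sumrB -scaler_suml.
by rewrite w_sum1 scale1r meanl meanr subrK.
Qed.

End WeightedSums.

Lemma bigmax_le_sum (R : realDomainType) (I : finType) (P : pred I) (F : I -> R) :
  (forall i, P i -> 0 <= F i) -> \big[Num.max/0]_(i | P i) F i <= \sum_(i | P i) F i.
Proof.
move=> F_ge0; apply: bigmax_le => [|i Pi]; first exact: sumr_ge0.
by rewrite (bigD1 i) //= lerDl sumr_ge0 // => j /andP[/F_ge0].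
Qed.

Lemma double_sum_ge_cross (R : numDomainType) (I : finType) (B : {pred I})
    (g : I -> I -> R) i0 :
  i0 \in B -> g i0 i0 = 0 -> (forall i j, 0 <= g i j) ->
  \sum_(i in B) g i i0 + \sum_(j in B) g i0 j <= \sum_(i in B) \sum_(j in B) g i j.
Proof.
move=> Bi0 g00 g_ge0.
rewrite [X in _ <= X](bigD1 i0) //= [X in X + _ <= _](bigD1 i0) //= g00 add0r.
rewrite [X in X <= _]addrC lerD2l; apply: ler_sum => i _.
by rewrite (bigD1 i0) //= lerDl sumr_ge0.
Qed.

Lemma le_2ln1Dx (R : realType) (x : R) : 0 <= x <= 1 -> x <= 2 * ln (1 + x).
Proof.
case/andP=> x_ge0 x_le1; have x1_gt0 : 0 < 1 + x by lra.
have inv_gt0 : 0 < (1 + x)^-1 by rewrite invr_gt0.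
have /le_ln1Dx : -1 < (1 + x)^-1 - 1 by lra.
rewrite addrC subrK lnV ?posrE // => ln_ge.
have : x / 2 <= x / (1 + x) by rewrite ler_wpM2l // lef_pV2 ?posrE //; lra.
have -> : x / (1 + x) = 1 - (1 + x)^-1 by field; rewrite gt_eqF.
lra.
Qed.

Section EllipticalPotential.
Variables (R : realType) (S A : finType) (d : nat).
Variables (Sr : S -> A -> {set S}) (phi : S -> A -> S -> 'cV[R]_d).
Variables (st : nat -> S) (at_ : nat -> A) (lam Lphi : R) (thhat : nat -> 'cV[R]_d).
Hypothesis htraj : forall t, st t.+1 \in St Sr st at_ t.
Hypothesis hphi : forall s a s', norm2 (phi s a s') <= Lphi.
Hypothesis lam_gt0 : 0 < lam.
Hypothesis hlam : Lphi ^+ 2 <= lam.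

Local Notation Sset t := (St Sr st at_ t).
Local Notation p t s := (pt Sr phi st at_ t s (thhat t.+1)).
Local Notation ph t s := (phit phi st at_ t s).
Local Notation phc t s := (phihat Sr phi st at_ thhat t s).
Local Notation Sig t := (Sigma Sr phi st at_ lam thhat t).

Lemma pt_ge0 t s th : 0 <= pt Sr phi st at_ t s th.
Proof. by rewrite divr_ge0 ?expR_ge0 ?sumr_ge0 // => s' _; rewrite expR_ge0. Qed.

Lemma pt_sum1 t th : \sum_(s in Sset t) pt Sr phi st at_ t s th = 1.
Proof.
rewrite /pt /mnl_prob -big_distrl /= mulfV // gt_eqF // (bigD1 (st t.+1)) //=.
by rewrite ltr_pwDl ?expR_gt0 ?sumr_ge0 // => s _; rewrite expR_ge0.
Qed.

Lemma pt_le1 t s th : s \in Sset t -> pt Sr phi st at_ t s th <= 1.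
Proof.
move=> s_in; rewrite -(pt_sum1 t th) (bigD1 s) //= lerDl.
by rewrite sumr_ge0 // => s' _; rewrite pt_ge0.
Qed.

Definition potential t := \sum_(s in Sset t) p t s * wnorm2 (invmx (Sig t)) (phc t s).

Definition hess_terms t := [seq (p t s, phc t s) | s <- enum (Sset t)].

Lemma hess_terms_ge0 t : all (fun k => 0 <= k.1) (hess_terms t).
Proof. by apply/allP => k /mapP [s _ ->]; rewrite pt_ge0. Qed.

Lemma Sigma1 : Sig 1 = lam%:M.
Proof. by rewrite /Sigma big_geq // addr0. Qed.

Lemma SigmaS t : (1 <= t)%N -> Sig t.+1 = outer_update (Sig t) (hess_terms t).
Proof.
move=> t_ge1; rewrite /Sigma big_nat_recr //= addrA /outer_update; congr (_ + _).
by rewrite big_map big_enum /= /hess_loss wsum_outer_centered // pt_sum1.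
Qed.

Lemma posdef_Sigma t : (1 <= t)%N -> posdef (Sig t).
Proof.
elim: t => // t IH _; have [->|t_gt0] := posnP t.
  by rewrite Sigma1; exact: posdef_scalar.
by rewrite SigmaS //; apply/posdef_outer_update/IH => //; exact: hess_terms_ge0.
Qed.

Lemma wnorm2_Sigma_ge t x : (1 <= t)%N -> lam * dotv x x <= wnorm2 (Sig t) x.
Proof.
elim: t => // t IH _; have [->|t_gt0] := posnP t; first by rewrite Sigma1 wnorm2_scalar.
rewrite SigmaS // wnorm2_outer_update ler_wpDr ?IH // big_seq sumr_ge0 // => k k_in.
by rewrite mulr_ge0 ?sqr_ge0 ?(allP (hess_terms_ge0 t)).
Qed.

Lemma wnorm2_invSigma_le t v : (1 <= t)%N ->
  wnorm2 (invmx (Sig t)) v <= lam^-1 * dotv v v.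
Proof.
move=> t_ge1.
have := posdef_invmx_le v (posdef_Sigma t_ge1) (posdef_scalar d lam_gt0) ltr01.
rewrite invmx_scalar wnorm2_scalar mul1r; apply => x.
by rewrite mul1r wnorm2_scalar wnorm2_Sigma_ge.
Qed.

Lemma det_Sigma_ge t : (1 <= t)%N ->
  \det (Sig t) * (1 + potential t) <= \det (Sig t.+1).
Proof.
move=> t_ge1; rewrite SigmaS //; apply: le_trans (det_outer_update_ge _ _) => //.
- by rewrite /potential /hess_terms big_map big_enum.
- exact: hess_terms_ge0.
- exact: posdef_Sigma.
Qed.

Lemma wsum_wnorm2_phihat t M : M^T = M ->
  \sum_(s in Sset t) p t s * wnorm2 M (phc t s) =
  \sum_(s in Sset t) p t s * wnorm2 M (ph t s)
  - wnorm2 M (phibar Sr phi st at_ t (thhat t.+1)).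
Proof. by move=> sM; rewrite wsum_wnorm2_centered ?pt_sum1. Qed.

Lemma wsum_wnorm2_phihat_le t M c : M^T = M -> (forall x, 0 <= wnorm2 M x) ->
  (forall s, wnorm2 M (ph t s) <= c) ->
  \sum_(s in Sset t) p t s * wnorm2 M (phc t s) <= c.
Proof.
move=> sM M_ge0 ph_le; rewrite wsum_wnorm2_phihat // lerBlDr ler_wpDr //.
rewrite -[c]mul1r -(pt_sum1 t (thhat t.+1)) mulr_suml.
by apply: ler_sum => s _; rewrite ler_wpM2l ?pt_ge0.
Qed.

Lemma potential_ge0 t : (1 <= t)%N -> 0 <= potential t.
Proof.
move=> t_ge1; apply: sumr_ge0 => s _.
by rewrite mulr_ge0 ?pt_ge0 // posdef_wnorm2_invmx_ge0 //; exact: posdef_Sigma.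
Qed.

Lemma potential_le1 t : (1 <= t)%N -> potential t <= 1.
Proof.
move=> t_ge1; have pdS := posdef_Sigma t_ge1.
apply: le_trans (_ : lam^-1 * Lphi ^+ 2 <= 1); last by rewrite ler_pdivrMl // mulr1.
apply: wsum_wnorm2_phihat_le => [|x|s]; first by rewrite trmx_inv pdS.1.
  exact: posdef_wnorm2_invmx_ge0.
apply: le_trans (wnorm2_invSigma_le _ t_ge1) _.
by rewrite ler_wpM2l ?invr_ge0 ?(ltW lam_gt0) ?dotv_le_sqr ?hphi.
Qed.

Lemma mxtrace_Sigma t : \tr (Sig t.+1) <= d%:R * lam + t%:R * Lphi ^+ 2.
Proof.
elim: t => [|t IH]; first by rewrite Sigma1 mxtrace_scalar mul0r addr0 mulr_natl.
rewrite SigmaS // mxtrace_outer_update /hess_terms big_map big_enum /=.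
under eq_bigr do rewrite -wnorm2_1.
rewrite -natr1 mulrDl mul1r addrA lerD //.
apply: wsum_wnorm2_phihat_le => [|x|s]; rewrite ?trmx1 // wnorm2_1 ?dotv_ge0 //.
exact/dotv_le_sqr/hphi.
Qed.

Lemma sum_ln_potential_le T : \sum_(1 <= t < T.+1) ln (1 + potential t) <=
  ln (\det (Sig T.+1)) - ln (\det (Sig 1)).
Proof.
elim: T => [|T IH]; first by rewrite big_geq // subrr.
rewrite big_nat_recr //=.
have [T_ge1 T1_ge1] : (1 <= T.+1 /\ 1 <= T.+2)%N by [].
have det_gt0 := posdef_det_gt0 (posdef_Sigma T_ge1).
have pot_gt0 : 0 < 1 + potential T.+1 by rewrite ltr_pwDl ?potential_ge0.
have : ln (\det (Sig T.+1) * (1 + potential T.+1)) <= ln (\det (Sig T.+2)).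
  rewrite ler_ln ?posrE ?mulr_gt0 ?det_Sigma_ge //.
  exact/posdef_det_gt0/posdef_Sigma.
rewrite lnM ?posrE //; lra.
Qed.

Lemma Umax_ge1 : (1 <= Umax Sr)%N.
Proof.
have /leq_trans : (0 < #|Sset 0|)%N by apply/card_gt0P; exists (st 1).
apply; apply: leq_trans (leq_bigmax (F := fun s => \max_(a : A) #|Sr s a|) (st 0)).
exact: (leq_bigmax (F := fun a => #|Sr (st 0) a|) (at_ 0)).
Qed.

Lemma logdet_Sigma_le T : ln (\det (Sig T.+1)) - ln (\det (Sig 1)) <=
  d%:R * ln (1 + T%:R * (Umax Sr)%:R * Lphi ^+ 2 / (lam * d%:R)).
Proof.
set q := _ / _; have pdS := posdef_Sigma (ltn0Sn T).
have q_ge0 : 0 <= q.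
  by rewrite divr_ge0 ?(mulr_ge0 _ (sqr_ge0 _)) ?mulr_ge0 ?ler0n ?(ltW lam_gt0).
have q1_gt0 : 0 < 1 + q by rewrite ltr_pwDl.
have m_gt0 : 0 < lam * (1 + q) by rewrite mulr_gt0.
have tr_ge0 : 0 <= \tr (Sig T.+1).
  by rewrite sumr_ge0 // => i _; rewrite ltW ?posdef_diag_gt0.
have mean_le : \tr (Sig T.+1) / d%:R <= lam * (1 + q).
  have [->|d_neq0] := eqVneq (d%:R : R) 0; first by rewrite invr0 mulr0 ltW.
  rewrite ler_pdivrMr ?lt0r ?d_neq0 ?ler0n //; apply: le_trans (mxtrace_Sigma T) _.
  have -> : lam * (1 + q) * d%:R = d%:R * lam + T%:R * (Umax Sr)%:R * Lphi ^+ 2.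
    by rewrite /q; field; rewrite d_neq0 gt_eqF.
  by rewrite lerD2l mulrAC ler_peMr ?(mulr_ge0 _ (sqr_ge0 _)) ?ler1n ?Umax_ge1.
have : \det (Sig T.+1) <= (lam * (1 + q)) ^+ d.
  apply: le_trans (posdef_det_le_trace pdS) _.
  by apply: lerXn2r; rewrite ?nnegrE ?divr_ge0 ?ler0n ?(ltW m_gt0).
rewrite -ler_ln ?posrE ?exprn_gt0 ?posdef_det_gt0 // (lnXn _ m_gt0) lnM ?posrE //.
by rewrite Sigma1 det_scalar (lnXn _ lam_gt0) mulrnDl mulr_natl lerBlDl.
Qed.

Lemma sum_potential_le T : \sum_(1 <= t < T.+1) potential t <=
  2 * d%:R * ln (1 + T%:R * (Umax Sr)%:R * Lphi ^+ 2 / (lam * d%:R)).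
Proof.
apply: le_trans (_ : \sum_(1 <= t < T.+1) 2 * ln (1 + potential t) <= _).
  apply: ler_sum_nat => t /andP[t_ge1 _].
  by rewrite le_2ln1Dx ?potential_ge0 ?potential_le1.
rewrite -mulr_sumr -mulrA ler_pM2l //.
exact: le_trans (sum_ln_potential_le T) (logdet_Sigma_le T).
Qed.

Lemma sum_le_scaled_potential T c (F : nat -> R) : 0 <= c ->
  (forall t, (1 <= t <= T)%N -> F t <= c * potential t) ->
  \sum_(1 <= t < T.+1) F t <=
  2 * d%:R * c * ln (1 + T%:R * (Umax Sr)%:R * Lphi ^+ 2 / (lam * d%:R)).
Proof.
move=> c_ge0 F_le; rewrite [_ * c]mulrC -[c * _ * _]mulrA.
apply: le_trans (ler_wpM2l c_ge0 (sum_potential_le T)).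
by rewrite mulr_sumr; apply: ler_sum_nat => t /F_le.
Qed.

Section CurvatureBounds.
Variables (t : nat) (kappa : R).
Hypothesis t_ge1 : (1 <= t)%N.
Hypothesis kappa_gt0 : 0 < kappa.
Hypothesis hkappa :
  forall s s', s \in Sset t -> s' \in Sset t -> kappa <= p t s * p t s'.
Hypothesis hzero : exists2 s0, s0 \in Sset t & ph t s0 = 0.

Let M := invmx (Sig t).

Let M_sym : M^T = M.
Proof. by rewrite /M trmx_inv (posdef_Sigma t_ge1).1. Qed.

Let M_ge0 x : 0 <= wnorm2 M x.
Proof. exact/posdef_wnorm2_invmx_ge0/posdef_Sigma. Qed.

(* Twice the potential is the [p (x) p]-weighted sum [G] of the squared
   distances [||phi_s - phi_s'||^2], so it dominates [kappa G]; in [G], the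
   pairs through the zero feature [s0] alone contribute [2 sum_s ||phi_s||^2]. *)
Lemma sum_wnorm2_phit_le :
  \sum_(s in Sset t) wnorm2 M (ph t s) <= kappa^-1 * potential t.
Proof.
have [s0 s0_in ph0] := hzero; set g := fun s s' => wnorm2 M (ph t s - ph t s').
have g00 : g s0 s0 = 0 by rewrite /g subrr wnorm2_0.
have := double_sum_ge_cross s0_in g00 (fun s s' => M_ge0 _).
rewrite /g ph0; under eq_bigr do rewrite subr0.
under [X in _ + X]eq_bigr do rewrite sub0r.
set Q := \sum_(s in Sset t) wnorm2 M (ph t s).
set G := \sum_(s in Sset t) \sum_(s' in Sset t) wnorm2 M (ph t s - ph t s').
have -> : \sum_(s in Sset t) wnorm2 M (- ph t s) = Q.
  by apply: eq_bigr => s _; rewrite -scaleN1r wnorm2Z sqrrN expr1n mul1r.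
move=> /(ler_wpM2l (ltW kappa_gt0)) cross.
have weighted : kappa * G <= 2 * potential t.
  have pairs := wsum_wnorm2_pairdiff (phit phi st at_ t) (pt_sum1 t (thhat t.+1)).
  rewrite -(pairs _ M_sym) mulr_sumr.
  apply: ler_sum => s s_in; rewrite mulr_sumr; apply: ler_sum => s' s'_in.
  by rewrite ler_wpM2r ?M_ge0 ?hkappa.
rewrite ler_pdivlMl //; lra.
Qed.

Lemma max_wnorm2_phit_le :
  \big[Num.max/0]_(s in Sset t) wnorm2 M (ph t s) <= kappa^-1 * potential t.
Proof. by apply: le_trans sum_wnorm2_phit_le; apply: bigmax_le_sum. Qed.

Lemma max_wnorm2_phihat_le :
  \big[Num.max/0]_(s in Sset t) wnorm2 M (phc t s) <= 4 * kappa^-1 * potential t.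
Proof.
have Q_le := sum_wnorm2_phit_le; set Q := \sum_(s in Sset t) _ in Q_le.
have Q_ge0 : 0 <= Q by rewrite sumr_ge0.
have mean_le : wnorm2 M (\sum_(s in Sset t) p t s *: ph t s) <= Q.
  have : 0 <= \sum_(s in Sset t) p t s * wnorm2 M (phc t s).
    by rewrite sumr_ge0 // => s _; rewrite mulr_ge0 ?pt_ge0.
  rewrite wsum_wnorm2_phihat // subr_ge0 => /le_trans; apply.
  by apply: ler_sum => s s_in; rewrite ler_piMl ?pt_le1.
apply: bigmax_le => [|s s_in]; first by rewrite -mulrA mulr_ge0 // (le_trans Q_ge0).
rewrite /phihat; apply: le_trans (wnorm2B_le M_sym (M_ge0 _)) _.
have : wnorm2 M (ph t s) <= Q by rewrite /Q (bigD1 s) //= lerDl sumr_ge0.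
rewrite -mulrA; lra.
Qed.

End CurvatureBounds.

End EllipticalPotential.

Section VanishingFeatures.
Variables (R : realType) (S A : finType) (d : nat).
Variables (Sr : S -> A -> {set S}) (phi : S -> A -> S -> 'cV[R]_d).
Variables (st : nat -> S) (at_ : nat -> A) (thhat : nat -> 'cV[R]_d).
Hypothesis phi0 : forall s a s', phi s a s' = 0.

Lemma wnorm2_phit_eq0 M t s : wnorm2 M (phit phi st at_ t s) = 0.
Proof. by rewrite /phit phi0 wnorm2_0. Qed.

Lemma phihat_eq0 t s : phihat Sr phi st at_ thhat t s = 0.
Proof.
rewrite /phihat /phit phi0 sub0r big1 ?oppr0 // => s' _.
by rewrite /phit phi0 scaler0.
Qed.

Lemma feature_sums_eq0 (M : nat -> 'M[R]_d) T :
  [/\ \sum_(1 <= t < T.+1) \big[Num.max/0]_(s in St Sr st at_ t)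
        wnorm2 (M t) (phit phi st at_ t s) = 0,
      \sum_(1 <= t < T.+1) \sum_(s in St Sr st at_ t)
        pt Sr phi st at_ t s (thhat t.+1) *
        wnorm2 (M t) (phihat Sr phi st at_ thhat t s) = 0
    & \sum_(1 <= t < T.+1) \big[Num.max/0]_(s in St Sr st at_ t)
        wnorm2 (M t) (phihat Sr phi st at_ thhat t s) = 0].
Proof.
split; rewrite big1 // => t _.
- by rewrite big1_idem //= ?maxxx // => s _; rewrite wnorm2_phit_eq0.
- by rewrite big1 // => s _; rewrite phihat_eq0 wnorm2_0 mulr0.
- by rewrite big1_idem //= ?maxxx // => s _; rewrite phihat_eq0 wnorm2_0.
Qed.

End VanishingFeatures.

Theorem lemma27 (R : realType) (S A : finType) (d : nat)
  (Sr : S -> A -> {set S}) (phi : S -> A -> S -> 'cV[R]_d)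
  (Lphi Ltheta kappa lam eta : R) (theta_star : 'cV[R]_d)
  (st : nat -> S) (at_ : nat -> A) (thhat : nat -> 'cV[R]_d) (T : nat)
  (* (A1) *)
  (hphi : forall s a s', norm2 (phi s a s') <= Lphi)
  (htheta : norm2 theta_star <= Ltheta)
  (* (A2) *)
  (hkappa : 0 < kappa < 1)
  (hA2 : forall t : nat, (1 <= t <= T)%N ->
     forall s' s'', s' \in St Sr st at_ t -> s'' \in St Sr st at_ t ->
     forall th : 'cV[R]_d, norm2 th <= Ltheta ->
       kappa <= pt Sr phi st at_ t s' th * pt Sr phi st at_ t s'' th)
  (* (A3) *)
  (hA3 : forall s a, exists2 s', s' \in Sr s a & phi s a s' = 0)
  (* trajectory: next state lies in the reachable set *)
  (htraj : forall t : nat, st t.+1 \in St Sr st at_ t)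
  (* estimator *)
  (heta : 0 < eta)
  (homd : is_omd_seq Sr phi st at_ lam eta Ltheta thhat)
  (hlam : Lphi ^+ 2 <= lam) :
  let logterm := ln (1 + T%:R * (Umax Sr)%:R * Lphi ^+ 2 / (lam * d%:R)) in
  [/\ \sum_(1 <= t < T.+1)
        \big[Num.max/0]_(s' in St Sr st at_ t)
          wnorm2 (invmx (Sigma Sr phi st at_ lam thhat t)) (phit phi st at_ t s')
        <= 2 * d%:R / kappa * logterm,
      \sum_(1 <= t < T.+1) \sum_(s' in St Sr st at_ t)
          pt Sr phi st at_ t s' (thhat t.+1) *
          wnorm2 (invmx (Sigma Sr phi st at_ lam thhat t))
                 (phihat Sr phi st at_ thhat t s')
        <= 2 * d%:R * logterm
    & \sum_(1 <= t < T.+1)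
        \big[Num.max/0]_(s' in St Sr st at_ t)
          wnorm2 (invmx (Sigma Sr phi st at_ lam thhat t))
                 (phihat Sr phi st at_ thhat t s')
        <= 8 * d%:R / kappa * logterm].
Proof.
move=> logterm; have [lam_gt0|lam_le0] := ltP 0 lam; last first.
  (* [lam = 0] forces all features to vanish, and [x / 0 = 0] makes the
     log term [ln 1 = 0]. *)
  have lam0 : lam = 0 by apply/le_anti; rewrite lam_le0 (le_trans (sqr_ge0 _) hlam).
  have phi0 s a s' : phi s a s' = 0.
    by apply: norm2_le_eq0 (hphi s a s') _; rewrite -lam0.
  pose M t := invmx (Sigma Sr phi st at_ lam thhat t).
  have [-> -> ->] := feature_sums_eq0 Sr st at_ thhat phi0 M T.
  by rewrite /logterm lam0 mul0r invr0 mulr0 addr0 ln1 !mulr0.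
have kappa_gt0 : 0 < kappa by case/andP: hkappa.
have curv t : (1 <= t <= T)%N ->
    forall s s', s \in St Sr st at_ t -> s' \in St Sr st at_ t ->
    kappa <= pt Sr phi st at_ t s (thhat t.+1) * pt Sr phi st at_ t s' (thhat t.+1).
  move=> /[dup] tT /andP[t_ge1 _] s s' s_in s'_in.
  by apply: hA2 => //; exact: (homd.2 t t_ge1).1.
have zero t : exists2 s0, s0 \in St Sr st at_ t & phit phi st at_ t s0 = 0.
  exact: hA3.
have kinv_ge0 : 0 <= kappa^-1 by rewrite invr_ge0 ltW.
have -> : 8 * d%:R / kappa = 2 * d%:R * (4 * kappa^-1) by ring.
split.
- apply: (sum_le_scaled_potential htraj hphi lam_gt0 hlam kinv_ge0).
  by move=> t /[dup] /curv hk /andP[t_ge1 _]; exact: max_wnorm2_phit_le.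
- exact: (sum_potential_le thhat htraj hphi lam_gt0 hlam).
- apply: (sum_le_scaled_potential htraj hphi lam_gt0 hlam (mulr_ge0 _ kinv_ge0)) => //.
  by move=> t /[dup] /curv hk /andP[t_ge1 _]; exact: max_wnorm2_phihat_le.
Qed.
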